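(* Let $p<q$ be coprime positive integers and $m$ a positive integer; put $k=\gcd(m,q-p)$ and $a=m/k$. Let $A=\mathbb C[X_0,\dots,X_4]$, graded by $\mathbb Z\times\mathbb Z/m\mathbb Z$ with $X_0$ of degree $(1,0)$, $X_1,X_2$ of degree $(-p,-1)$, $X_3,X_4$ of degree $(q,1)$, and for $s\in\mathbb C$ let $J_s=(X_0^{q-p},\;X_2,\;X_4,\;s-X_1^{aq}X_3^{ap})$. Then $\dim(A/J_1)_{(n,d)}\ge 1$ and $\dim(A/J_0)_{(n,d)}\ge 1$ for all $(n,d)\in\mathbb Z\times\mathbb Z/m\mathbb Z$.
   Context: The grading is the weight grading for the action of $G_0\times G_m$ ($G_0\cong\mathbb C^*$, $G_m\cong\mu_m$) on $\mathbb C^5$ given by $t\cdot(x_0,\dots,x_4)=(tx_0,t^{-p}x_1,t^{-p}x_2,t^qx_3,t^qx_4)$ and $\zeta\cdot(x_0,\dots,x_4)=(x_0,\zeta^{-1}x_1,\zeta^{-1}x_2,\zeta x_3,\zeta x_4)$. *)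

From HB Require Import structures.
From mathcomp Require Import all_boot all_algebra.
From mathcomp Require Import complex.
From mathcomp Require Import Rstruct.
From mathcomp Require Import mpoly.
Set Implicit Arguments. Unset Strict Implicit. Unset Printing Implicit Defensive.
Import GRing.Theory.
Local Open Scope ring_scope.

Definition CC : fieldType := complex Rdefinitions.R.

Definition A := {mpoly CC[5]}.

Definition vx (i : nat) : 'I_5 := inord i.

(* The Z x Z/mZ grading: X_0 has degree (1,0), X_1, X_2 have degree (-p,-1),
   X_3, X_4 have degree (q,1).  The Z/mZ-component is represented by an
   integer, taken modulo m. *)
Definition wdegZ (p q : nat) (mon : 'X_{1..5}) : int :=
  (mon (vx 0))%:Z - p%:Z * (mon (vx 1) + mon (vx 2))%:Z
  + q%:Z * (mon (vx 3) + mon (vx 4))%:Z.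

Definition wdegm (mon : 'X_{1..5}) : int :=
  - (mon (vx 1) + mon (vx 2))%:Z + (mon (vx 3) + mon (vx 4))%:Z.

Definition in_graded_piece (p q m : nat) (n d : int) (f : A) : Prop :=
  forall mon, mon \in msupp f ->
    wdegZ p q mon = n /\ (wdegm mon = d %[mod m%:Z])%Z.

Definition in_ideal (k : nat) (g : 'I_k -> A) (f : A) : Prop :=
  exists h : 'I_k -> A, f = \sum_(i < k) h i * g i.

Definition Jgen (p q m : nat) (s : CC) (i : 'I_4) : A :=
  let a := (m %/ gcdn m (q - p))%N in
  match val i with
  | 0 => 'X_(vx 0) ^+ (q - p)
  | 1 => 'X_(vx 2)
  | 2 => 'X_(vx 4)
  | _ => s%:MP - 'X_(vx 1) ^+ (a * q) * 'X_(vx 3) ^+ (a * p)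
  end.

(* dim_C (A/J)_(n,d) >= 1, where (A/J)_(n,d) = A_(n,d) / (J /\ A_(n,d)):
   i.e. this quotient vector space is nonzero, i.e. some element of the
   graded piece A_(n,d) is not in J. *)
Definition quot_piece_dim_ge1 (p q m : nat) (s : CC) (n d : int) : Prop :=
  exists f : A, in_graded_piece p q m n d f /\ ~ in_ideal (Jgen p q m s) f.

From HB Require Import structures.
From mathcomp Require Import all_boot all_algebra.
From mathcomp Require Import complex.
From mathcomp Require Import Rstruct.
From mathcomp Require Import mpoly.
From mathcomp Require Import all_order ring.
Set Implicit Arguments.
Unset Strict Implicit.
Unset Printing Implicit Defensive.

Import Order.TTheory GRing.Theory Num.Theory.
Local Open Scope ring_scope.

(* The witness is a monomial X_1^b X_3^c X_0^e with e < q - p.  Its degree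
   is (e - p b + q c, c - b mod m); solving for it in integers and then
   shifting (b, c) by a multiple of (a q, a p), which changes neither degree
   because m divides a (q - p), makes b, c >= 0 with b < a q or c < a p.
   Such a monomial is not in J_s: substituting X_0 = T, X_1 = u, X_3 = v,
   X_2 = X_4 = 0 with u, v in C[Y], the T^e-coefficient of the image of any
   element of J_s is a multiple of s - u^(a q) v^(a p), while that of the
   monomial is u^b v^c.  Take u = v = 1 for s = 1, and u = Y or v = Y for
   s = 0. *)

Lemma divz_subr_mul_ge0 (x P j : int) :
  0 < P -> j <= (x %/ P)%Z -> 0 <= x - P * j.
Proof.
move=> P_gt0 le_j; rewrite subr_ge0.
apply: le_trans (ler_wpM2l (ltW P_gt0) le_j) _.
by rewrite mulrC lez_floor // gt_eqF.
Qed.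

Lemma exists_reduced_pair (x y P Q : int) : 0 < P -> 0 < Q ->
  exists j : int,
    [/\ 0 <= x - P * j, 0 <= y - Q * j & (x - P * j < P) || (y - Q * j < Q)].
Proof.
wlog le_xy : x y P Q / (x %/ P <= y %/ Q)%Z => [hwlog P_gt0 Q_gt0|P_gt0 Q_gt0].
  have [le_xy|/ltW le_yx] := leP (x %/ P)%Z (y %/ Q)%Z; first exact: hwlog.
  have [j [hy hx reduced]] := hwlog y x Q P le_yx Q_gt0 P_gt0.
  by exists j; split; rewrite // orbC.
exists (x %/ P)%Z; split; rewrite ?divz_subr_mul_ge0 //.
have -> : x - P * (x %/ P)%Z = (x %% P)%Z by rewrite {1}(divz_eq x P); ring.
by rewrite ltz_pmod.
Qed.

Section Exponents.

Variables (p q m : nat).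
Hypotheses (p_gt0 : (0 < p)%N) (lt_pq : (p < q)%N) (m_gt0 : (0 < m)%N).
Local Notation g := (q - p)%N.
Local Notation a := (m %/ gcdn m g)%N.

Lemma exists_exponents (n d : int) :
  exists e b c : nat,
    [/\ (e < g)%N, e%:Z - p%:Z * b%:Z + q%:Z * c%:Z = n,
        (c%:Z - b%:Z = d %[mod m%:Z])%Z & (b < a * q)%N || (c < a * p)%N].
Proof.
have g_gt0 : 0 < g%:Z by rewrite ltz_nat subn_gt0.
have gE : g%:Z = q%:Z - p%:Z by rewrite subzn // ltnW.
have a_gt0 : (0 < a)%N.
  by rewrite divn_gt0 ?gcdn_gt0 ?m_gt0 // dvdn_leq // dvdn_gcdl.
set e0 := ((n - p%:Z * d) %% g)%Z; set c0 := ((n - p%:Z * d) %/ g)%Z.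
have nE : n = c0 * (q%:Z - p%:Z) + e0 + p%:Z * d.
  by rewrite -gE -divz_eq subrK.
have aq_gt0 : 0 < (a * q)%N%:Z.
  by rewrite ltz_nat muln_gt0 a_gt0 (ltn_trans p_gt0 lt_pq).
have ap_gt0 : 0 < (a * p)%N%:Z by rewrite ltz_nat muln_gt0 a_gt0.
have [j [b_ge0 c_ge0 reduced]] := exists_reduced_pair (c0 - d) c0 aq_gt0 ap_gt0.
have e_ge0 : 0 <= e0 by rewrite modz_ge0 ?gt_eqF.
set b := c0 - d - (a * q)%N%:Z * j; set c := c0 - (a * p)%N%:Z * j.
exists (absz e0), (absz b), (absz c).
rewrite -!ltz_nat !abszE !ger0_norm //; split => //.
- by rewrite ltz_pmod.
- by rewrite nE /b /c !PoszM; ring.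
- have agE : a%:Z * (q%:Z - p%:Z) = (g %/ gcdn m g)%N%:Z * m%:Z.
    rewrite -gE -!PoszM divn_mulAC ?dvdn_gcdl //.
    by rewrite mulnC -divn_mulAC ?dvdn_gcdr.
  suff -> : c - b = (g %/ gcdn m g)%N%:Z * j * m%:Z + d by exact: modzMDl.
  by rewrite /b /c -mulrAC -agE !PoszM; ring.
Qed.

End Exponents.

Lemma vxK i : (i < 5)%N -> val (vx i) = i.
Proof. exact: inordK. Qed.

Definition X1X3X0 (b c e : nat) : A :=
  'X_(vx 1) ^+ b * 'X_(vx 3) ^+ c * 'X_(vx 0) ^+ e.

Lemma X1X3X0_graded (p q m : nat) (n d : int) (b c e : nat) :
  e%:Z - p%:Z * b%:Z + q%:Z * c%:Z = n -> (c%:Z - b%:Z = d %[mod m%:Z])%Z ->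
  in_graded_piece p q m n d (X1X3X0 b c e).
Proof.
move=> degZ degm mon.
rewrite /X1X3X0 !mpolyXn -!mpolyXD msuppX mem_seq1 => /eqP ->.
have vxE i j : (i < 5)%N -> (j < 5)%N -> (vx i == vx j) = (i == j).
  by move=> lti ltj; rewrite -val_eqE /= !vxK.
rewrite /wdegZ /wdegm !mnmDE !mulmnE !mnm1E !vxE //=.
rewrite !mul0n !mul1n !add0n !addn0.
by split; rewrite // addrC.
Qed.

Lemma Xn_neq_mulXn (R : nzRingType) (t : {poly R}) (b k : nat) :
  (b < k)%N -> 'X^b != t * 'X^k.
Proof.
move=> lt_bk; apply/eqP => /(congr1 (fun P : {poly R} => P`_b)).
by rewrite coefXn eqxx coefMXn lt_bk => /eqP; rewrite oner_eq0.
Qed.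

Definition polyCC : {rmorphism CC -> {poly {poly CC}}} := polyC \o polyC.

Definition eval_X0_X1_X3 (u v : {poly CC}) :
    {rmorphism A -> {poly {poly CC}}} :=
  mmap polyCC (fun i : 'I_5 =>
    match val i with 0 => 'X | 1 => u%:P | 3 => v%:P | _ => 0 end).

Section IdealMembership.

Variables (p q m : nat).
Local Notation a := (m %/ gcdn m (q - p))%N.

Section Evaluation.

Variables (s : CC) (u v : {poly CC}).
Local Notation eval := (eval_X0_X1_X3 u v).

Lemma eval_X i : (i < 5)%N -> eval 'X_(vx i) =
  match i with 0 => 'X | 1 => u%:P | 3 => v%:P | _ => 0 end.
Proof. by move=> lti; rewrite /eval_X0_X1_X3 /= mmapX mmap1U vxK. Qed.

Lemma eval_C c : eval c%:MP = c%:P%:P.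
Proof. by rewrite /eval_X0_X1_X3 /= mmapC. Qed.

Lemma in_J_combination f : in_ideal (Jgen p q m s) f ->
  exists h0 h1 h2 h3 : A,
    f = h0 * 'X_(vx 0) ^+ (q - p) + h1 * 'X_(vx 2) + h2 * 'X_(vx 4)
        + h3 * (s%:MP - 'X_(vx 1) ^+ (a * q) * 'X_(vx 3) ^+ (a * p)).
Proof.
move=> [h ->]; rewrite !big_ord_recl big_ord0 addr0 !addrA.
by do 4 eexists.
Qed.

Lemma coef_eval_in_J f e : (e < q - p)%N -> in_ideal (Jgen p q m s) f ->
  exists t, (eval f)`_e = t * (s%:P - u ^+ (a * q) * v ^+ (a * p)).
Proof.
move=> lt_e /in_J_combination [h0 [h1 [h2 [h3 ->]]]].
rewrite !(rmorphD, rmorphM, rmorphN, rmorphXn) !eval_X // eval_C.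
rewrite !mulr0 !addr0 -!polyC_exp -polyCM -polyCB; exists (eval h3)`_e.
by rewrite coefD coefMXn lt_e add0r coefMC.
Qed.

Lemma X1X3X0_notin_J b c e : (e < q - p)%N ->
  (forall t, u ^+ b * v ^+ c != t * (s%:P - u ^+ (a * q) * v ^+ (a * p))) ->
  ~ in_ideal (Jgen p q m s) (X1X3X0 b c e).
Proof.
move=> lt_e not_mul /(coef_eval_in_J lt_e) [t].
rewrite /X1X3X0 !rmorphM !rmorphXn !eval_X // -!polyC_exp -polyCM.
rewrite coefMXn ltnn subnn coefC /= => eq_t.
by move: (not_mul t); rewrite eq_t eqxx.
Qed.

End Evaluation.

Lemma X1X3X0_notin_J1 b c e : (e < q - p)%N ->
  ~ in_ideal (Jgen p q m 1) (X1X3X0 b c e).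
Proof.
move=> lt_e; apply: (X1X3X0_notin_J (u := 1) (v := 1)) => // t.
by rewrite !expr1n mulr1 subrr mulr0 oner_neq0.
Qed.

Lemma X1X3X0_notin_J0 b c e :
  (e < q - p)%N -> (b < a * q)%N || (c < a * p)%N ->
  ~ in_ideal (Jgen p q m 0) (X1X3X0 b c e).
Proof.
move=> lt_e /orP[lt_b | lt_c].
- apply: (X1X3X0_notin_J (u := 'X) (v := 1)) => // t.
  by rewrite !expr1n !mulr1 sub0r mulrN -mulNr Xn_neq_mulXn.
- apply: (X1X3X0_notin_J (u := 1) (v := 'X)) => // t.
  by rewrite !expr1n !mul1r sub0r mulrN -mulNr Xn_neq_mulXn.
Qed.

End IdealMembership.

Theorem lemma4p7 (p q m : nat) :
  (0 < p)%N -> (p < q)%N -> coprime p q -> (0 < m)%N ->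
  forall n d : int,
    quot_piece_dim_ge1 p q m 1 n d /\ quot_piece_dim_ge1 p q m 0 n d.
Proof.
move=> p_gt0 lt_pq _ m_gt0 n d.
have [e [b [c [lt_e degZ degm reduced]]]] :=
  exists_exponents p_gt0 lt_pq m_gt0 n d.
have graded := X1X3X0_graded degZ degm.
split; exists (X1X3X0 b c e); split => //.
- exact: X1X3X0_notin_J1.
- exact: X1X3X0_notin_J0.
Qed.
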